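(* Let $(\|\cdot\|,\mathcal{P})$ be a sparsity structure on $\mathcal{E}$, let $B:\mathcal{X}\to\mathcal{E}$ be linear, and let $A:\mathcal{X}\to\mathbb{R}^n$ be linear. For $P\in\mathcal{P}$ define $$\mathcal{C}_P=\bigcup_{x\in\mathcal{X}:\ PBx=Bx}\mathcal{T}(x),\qquad \mathcal{D}_P=\{z\in\mathcal{X}:\ \|\bar P Bz\|\le\|PBz\|\}.$$ Then $\mathcal{C}_P\subseteq\mathcal{D}_P$ for every $P\in\mathcal{P}$. Consequently, for every $k\ge 0$, $\mu_k(A)\ge\sigma_k(A)$, where $$\mu_k(A)=\inf_{\substack{P\in\mathcal{P}_k,\ x\in\mathcal{X}\\ PBx=Bx}}\ \inf_{z\in\mathcal{T}(x),\,z\ne 0}\frac{\|Az\|_2}{\|z\|_2},\qquad \sigma_k(A)=\inf_{\substack{P\in\mathcal{P}_k,\ z\in\mathcal{X},\ z\neq 0\\ \|\bar PBz\|\le\|PBz\|}}\frac{\|Az\|_2}{\|z\|_2}.$$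
   Context: Sparsity structure: let $\mathcal{X},\mathcal{E}$ be finite-dimensional Euclidean spaces and $B:\mathcal{X}\to\mathcal{E}$ a linear map. A sparsity structure on $\mathcal{E}$ is a norm $\|\cdot\|$ on $\mathcal{E}$, with dual norm $\|\cdot\|_*$, together with a family $\mathcal{P}$ of linear maps $\mathcal{E}\to\mathcal{E}$ such that: (i) every $P\in\mathcal{P}$ is a projector, $P^2=P$; (ii) every $P\in\mathcal{P}$ is assigned a weight $\nu(P)\ge 0$ and a linear map $\bar P:\mathcal{E}\to\mathcal{E}$ with $P\bar P=0$; (iii) for every $P\in\mathcal{P}$ and all $f,g\in\mathcal{E}$, $\|P^*f+\bar P^*g\|_*\le\max(\|f\|_*,\|g\|_* )$, where $P^*$ and $\bar P^*$ denote adjoints. For $k\ge 0$, $\mathcal{P}_k=\{P\in\mathcal{P}:\nu(P)\le k\}$. Tangent cone: for $x\in\mathcal{X}$, $\mathcal{T}(x)=\{\lambda z:\ \lambda\ge 0,\ z\in\mathcal{X},\ \|Bx+Bz\|\le\|Bx\|\}$. $\|\cdot\|_2$ is the Euclidean norm. *)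

From Stdlib Require Import Reals.
From mathcomp Require Import all_boot.
Set Implicit Arguments.
Unset Strict Implicit.
Unset Printing Implicit Defensive.
Open Scope R_scope.

(* A finite-dimensional Euclidean space of dimension n is modelled as R^n,
   i.e. functions 'I_n -> R, with the standard inner product; linear maps are
   matrices, adjoints are transposes. *)
Definition vec (n : nat) := 'I_n -> R.
Definition mat (m n : nat) := 'I_m -> 'I_n -> R.

Definition vzero {n} : vec n := fun _ => 0.
Definition vadd {n} (u v : vec n) : vec n := fun i => u i + v i.
Definition vscale {n} (c : R) (v : vec n) : vec n := fun i => c * v i.
Definition dot {n} (u v : vec n) : R := \big[Rplus/0]_(i < n) (u i * v i).
Definition norm2 {n} (v : vec n) : R := sqrt (dot v v).

Definition mv {m n} (M : mat m n) (v : vec n) : vec m :=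
  fun i => \big[Rplus/0]_(j < n) (M i j * v j).
Definition mm {m n p} (M : mat m n) (N : mat n p) : mat m p :=
  fun i k => \big[Rplus/0]_(j < n) (M i j * N j k).
Definition tr {m n} (M : mat m n) : mat n m := fun i j => M j i.
Definition mzero {m n} : mat m n := fun _ _ => 0.

Definition is_norm {n} (N : vec n -> R) : Prop :=
  (forall v, N v = 0 -> v = vzero) /\
  (forall c v, N (vscale c v) = Rabs c * N v) /\
  (forall u v, N (vadd u v) <= N u + N v).

Definition is_dual_norm {n} (N : vec n -> R) (D : vec n -> R) : Prop :=
  forall f, is_lub (fun r => exists u, N u <= 1 /\ r = dot f u) (D f).

Definition sparsity_structure {e} (N D : vec e -> R) (Pfam : mat e e -> Prop)
  (nu : mat e e -> R) (Pbar : mat e e -> mat e e) : Prop :=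
  is_norm N /\ is_dual_norm N D /\
  forall P, Pfam P ->
    mm P P = P /\ 0 <= nu P /\ mm P (Pbar P) = mzero /\
    (forall f g, D (vadd (mv (tr P) f) (mv (tr (Pbar P)) g)) <= Rmax (D f) (D g)).

Definition tcone {m e} (N : vec e -> R) (B : mat e m) (x z : vec m) : Prop :=
  exists (lam : R) (z' : vec m),
    0 <= lam /\ N (mv B (vadd x z')) <= N (mv B x) /\ z = vscale lam z'.

Definition C_set {m e} (N : vec e -> R) (B : mat e m) (P : mat e e) (z : vec m) :=
  exists x : vec m, mv P (mv B x) = mv B x /\ tcone N B x z.

Definition D_set {m e} (N : vec e -> R) (B : mat e m) (Pb P : mat e e) (z : vec m) :=
  N (mv Pb (mv B z)) <= N (mv P (mv B z)).

(* The set of ratios whose infimum is mu_k(A). *)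
Definition mu_set {n m e} (N : vec e -> R) (Pfam : mat e e -> Prop)
  (nu : mat e e -> R) (B : mat e m) (A : mat n m) (k : R) (r : R) : Prop :=
  exists P x z, Pfam P /\ nu P <= k /\ mv P (mv B x) = mv B x /\
    tcone N B x z /\ z <> vzero /\ r = norm2 (mv A z) / norm2 z.

(* The set of ratios whose infimum is sigma_k(A). *)
Definition sigma_set {n m e} (N : vec e -> R) (Pfam : mat e e -> Prop)
  (nu : mat e e -> R) (Pbar : mat e e -> mat e e) (B : mat e m) (A : mat n m)
  (k : R) (r : R) : Prop :=
  exists P z, Pfam P /\ nu P <= k /\ z <> vzero /\
    D_set N B (Pbar P) P z /\ r = norm2 (mv A z) / norm2 z.

Definition lower_bound (S : R -> Prop) (c : R) : Prop := forall r, S r -> c <= r.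

(* inf S >= inf T (infima in the extended reals, inf of the empty set = +oo):
   every lower bound of T is a lower bound of S. *)
Definition inf_ge (S T : R -> Prop) : Prop :=
  forall c, lower_bound T c -> lower_bound S c.

(* The heart of the matter is the inequality N (P v) + N (Pbar v) <= N v for
   every P in the family: pick functionals f, g of dual norm at most 1 that norm
   P v and Pbar v; by axiom (iii) the functional P^T f + Pbar^T g again has dual
   norm at most 1, and it pairs with v to N (P v) + N (Pbar v).  Norming
   functionals exist by the finite-dimensional Hahn-Banach theorem: a dominating
   sublinear functional can be made linear one coordinate direction at a time.
   If P B x = B x then Pbar B x = 0, and for z in the tangent cone at x the
   inequality applied to B x + B z gives N (Pbar B z) <= N (P B z).  The bound
   mu_k >= sigma_k follows since the feasible set of mu_k is contained in that
   of sigma_k. *)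
From HB Require Import structures.
From Stdlib Require Import Reals Lra FunctionalExtensionality.
From mathcomp Require Import all_boot.
Open Scope R_scope.
Set Implicit Arguments.

Ltac vext := apply: functional_extensionality => ?; rewrite /vadd /vscale /vzero; ring.

Lemma Rplus_associative : associative Rplus. Proof. by move=> *; ring. Qed.
HB.instance Definition _ :=
  Monoid.isComLaw.Build R 0 Rplus Rplus_associative Rplus_comm Rplus_0_l.
HB.instance Definition _ := Monoid.isMulLaw.Build R 0 Rmult Rmult_0_l Rmult_0_r.
HB.instance Definition _ :=
  Monoid.isAddLaw.Build R Rmult Rplus Rmult_plus_distr_r Rmult_plus_distr_l.

Section LinearAlgebra.
Variables m n : nat.

Lemma mv_add (M : mat m n) u v : mv M (vadd u v) = vadd (mv M u) (mv M v).
Proof.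
apply: functional_extensionality => i; rewrite /mv /vadd -big_split /=.
by apply: eq_bigr => j _; ring.
Qed.

Lemma mv_scale (M : mat m n) c v : mv M (vscale c v) = vscale c (mv M v).
Proof.
apply: functional_extensionality => i; rewrite /mv /vscale big_distrr /=.
by apply: eq_bigr => j _; ring.
Qed.

Lemma dot_addl (u v w : vec n) : dot (vadd u v) w = dot u w + dot v w.
Proof. by rewrite /dot -big_split /=; apply: eq_bigr => i _; rewrite /vadd; ring. Qed.

Lemma dot_addr (u v w : vec n) : dot u (vadd v w) = dot u v + dot u w.
Proof. by rewrite /dot -big_split /=; apply: eq_bigr => i _; rewrite /vadd; ring. Qed.

Lemma dot_scaler (u v : vec n) s : dot u (vscale s v) = s * dot u v.
Proof. by rewrite /dot big_distrr /=; apply: eq_bigr => i _; rewrite /vscale; ring. Qed.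

Lemma dot_vzeror (u : vec n) : dot u vzero = 0.
Proof. by rewrite /dot big1 // => i _; rewrite /vzero; ring. Qed.

Lemma dot_tr (M : mat m n) (f : vec m) (v : vec n) :
  dot (mv (tr M) f) v = dot f (mv M v).
Proof.
rewrite /dot /mv /tr.
under eq_bigr => i _ do rewrite big_distrl /=.
under [RHS]eq_bigr => i _ do rewrite big_distrr /=.
by rewrite exchange_big /=; apply: eq_bigr => i _; apply: eq_bigr => j _; ring.
Qed.

Definition basis (i0 : 'I_n) : vec n := fun j => if j == i0 then 1 else 0.

Lemma dot_basisr (u : vec n) i0 : dot u (basis i0) = u i0.
Proof.
rewrite /dot (bigD1 i0) //= big1 /basis ?eqxx; first by ring.
by move=> i /negbTE ->; ring.
Qed.

Definition trunc (k : nat) (v : vec n) : vec n :=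
  fun i => if (i < k)%N then v i else 0.

Lemma trunc0 v : trunc 0 v = vzero.
Proof. by apply: functional_extensionality => i; rewrite /trunc ltn0. Qed.

Lemma trunc_full v : trunc n v = v.
Proof. by apply: functional_extensionality => i; rewrite /trunc ltn_ord. Qed.

Lemma truncS k v (Hk : (k < n)%N) :
  trunc k.+1 v = vadd (trunc k v) (vscale (v (Ordinal Hk)) (basis (Ordinal Hk))).
Proof.
apply: functional_extensionality => i; rewrite /trunc /vadd /vscale /basis.
case: eqP => [-> /=|Hi]; first by rewrite ltnSn ltnn; ring.
have Hik : (nat_of_ord i == k) = false.
  by apply/negbTE/eqP => Hik; apply: Hi; apply: val_inj.
by rewrite ltnS leq_eqVlt Hik /=; ring.
Qed.

Lemma truncS_out k v : (n <= k)%N -> trunc k.+1 v = trunc k v.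
Proof.
move=> Hk; apply: functional_extensionality => i; rewrite /trunc.
have Hi : (i < k)%N := leq_trans (ltn_ord i) Hk.
by rewrite Hi ltnS (ltnW Hi).
Qed.

End LinearAlgebra.

Section Sublinear.
Variable e : nat.
Implicit Types (q : vec e -> R) (u v d : vec e).

Definition sublinear q :=
  (forall u v, q (vadd u v) <= q u + q v) /\
  (forall c v, 0 <= c -> q (vscale c v) = c * q v).

Definition lin_along q d c := forall v s, q (vadd v (vscale s d)) = q v + s * c.

Lemma sublinear_vzero q : sublinear q -> q vzero = 0.
Proof.
move=> [_ Hhom]; have -> : (vzero : vec e) = vscale 0 vzero by vext.
by rewrite Hhom; [ring | lra].
Qed.

Lemma sublinear_scale_ge q d t : sublinear q -> t * q d <= q (vscale t d).
Proof.
move=> Hq; have [Hadd Hhom] := Hq.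
case: (Rle_dec 0 t) => Ht; first by rewrite Hhom //; lra.
have -> : vscale t d = vscale (- t) (vscale (-1) d) by vext.
rewrite Hhom; last by lra.
have := Hadd d (vscale (-1) d).
have -> : vadd d (vscale (-1) d) = vzero by vext.
rewrite sublinear_vzero // => Hopp.
by have := Rmult_le_compat_l (- t) (- q d) (q (vscale (-1) d)) ltac:(lra) ltac:(lra); lra.
Qed.

Lemma lin_along_slope q d c : sublinear q -> lin_along q d c -> c = q d.
Proof.
move=> Hq Hl; have := Hl vzero 1.
have -> : vadd vzero (vscale 1 d) = d by vext.
by rewrite sublinear_vzero //; lra.
Qed.

Lemma sublinear_lin_along_basis q : sublinear q ->
  (forall i, exists c, lin_along q (basis i) c) ->
  forall v, q v = dot (fun i => q (basis i)) v.
Proof.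
move=> Hq Hb v.
suff Htrunc k : q (trunc k v) = dot (fun i => q (basis i)) (trunc k v).
  by have := Htrunc e; rewrite trunc_full.
elim: k => [|k IH]; first by rewrite trunc0 sublinear_vzero // dot_vzeror.
case: (ltnP k e) => Hk; last by rewrite truncS_out.
have [c Hc] := Hb (Ordinal Hk).
rewrite truncS Hc dot_addr dot_scaler dot_basisr IH.
by rewrite -(lin_along_slope Hq Hc).
Qed.

(* One step of Hahn-Banach: [r v = inf_t (q (v + t d) - t q d)] is the
   largest sublinear minorant of [q] that is linear along [d]. *)
Section Linearize.
Variables (q : vec e -> R) (d : vec e) (r : vec e -> R).
Hypothesis q_sub : sublinear q.
Hypothesis r_le : forall v t, r v <= q (vadd v (vscale t d)) - t * q d.
Hypothesis r_greatest : forall v M,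
  (forall t, M <= q (vadd v (vscale t d)) - t * q d) -> M <= r v.

Lemma linearize_le v : r v <= q v.
Proof.
have := r_le v 0; have -> : vadd v (vscale 0 d) = v by vext.
by lra.
Qed.

Lemma linearize_vzero : r vzero = 0.
Proof.
apply: Rle_antisym; first by have := linearize_le vzero; rewrite (sublinear_vzero q_sub).
apply: r_greatest => t; have -> : vadd vzero (vscale t d) = vscale t d by vext.
by have := sublinear_scale_ge d t q_sub; lra.
Qed.

Lemma linearize_add u v : r (vadd u v) <= r u + r v.
Proof.
have [Hadd _] := q_sub.
have Hu : forall t2, r (vadd u v) - (q (vadd v (vscale t2 d)) - t2 * q d) <= r u.
  move=> t2; apply: r_greatest => t1; have := r_le (vadd u v) (t1 + t2).
  have -> : vadd (vadd u v) (vscale (t1 + t2) d) =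
            vadd (vadd u (vscale t1 d)) (vadd v (vscale t2 d)) by vext.
  by have := Hadd (vadd u (vscale t1 d)) (vadd v (vscale t2 d)); lra.
have : r (vadd u v) - r u <= r v by apply: r_greatest => t2; have := Hu t2; lra.
by lra.
Qed.

Lemma linearize_scale_le s v : 0 < s -> r (vscale s v) <= s * r v.
Proof.
have [_ Hhom] := q_sub; move=> Hs.
suff : / s * r (vscale s v) <= r v.
  by move=> /(Rmult_le_compat_l s _ _ (Rlt_le _ _ Hs)); rewrite -Rmult_assoc Rinv_r ?Rmult_1_l; lra.
apply: r_greatest => t; apply: (Rmult_le_reg_l s) => //.
rewrite -Rmult_assoc Rinv_r ?Rmult_1_l; last by lra.
have := r_le (vscale s v) (s * t).
have -> : vadd (vscale s v) (vscale (s * t) d) = vscale s (vadd v (vscale t d)) by vext.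
by rewrite Hhom; lra.
Qed.

Lemma linearize_sublinear : sublinear r.
Proof.
split; first exact: linearize_add.
move=> s v Hs; case: (Req_dec s 0) => [->|Hs0].
  have -> : vscale 0 v = vzero by vext.
  by rewrite linearize_vzero; ring.
apply: Rle_antisym; first by apply: linearize_scale_le; lra.
have := linearize_scale_le (vscale s v) (Rinv_0_lt_compat s ltac:(lra)).
have -> : vscale (/ s) (vscale s v) = v.
  by apply: functional_extensionality => x; rewrite /vscale; field.
move=> /(Rmult_le_compat_l s _ _ ltac:(lra)).
by rewrite -Rmult_assoc Rinv_r ?Rmult_1_l.
Qed.

Lemma linearize_lin_along_other d0 c0 : lin_along q d0 c0 -> lin_along r d0 c0.
Proof.
move=> Hl v s.
have E t : vadd (vadd v (vscale s d0)) (vscale t d) =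
           vadd (vadd v (vscale t d)) (vscale s d0) by vext.
apply: Rle_antisym.
  have : r (vadd v (vscale s d0)) - s * c0 <= r v.
    by apply: r_greatest => t; have := r_le (vadd v (vscale s d0)) t; rewrite E Hl; lra.
  by lra.
have : r v + s * c0 <= r (vadd v (vscale s d0)).
  by apply: r_greatest => t; have := r_le v t; rewrite E Hl; lra.
by lra.
Qed.

Lemma linearize_lin_along : lin_along r d (q d).
Proof.
move=> v s; apply: Rle_antisym.
  have : r (vadd v (vscale s d)) - s * q d <= r v.
    apply: r_greatest => t; have := r_le (vadd v (vscale s d)) (t - s).
    have -> : vadd (vadd v (vscale s d)) (vscale (t - s) d) = vadd v (vscale t d) by vext.
    by lra.
  by lra.
have : r v + s * q d <= r (vadd v (vscale s d)).
  apply: r_greatest => t; have := r_le v (s + t).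
  have -> : vadd v (vscale (s + t) d) = vadd (vadd v (vscale s d)) (vscale t d) by vext.
  by lra.
by lra.
Qed.

End Linearize.

Lemma linearize_exists q d : sublinear q -> exists r : vec e -> R,
  (forall v t, r v <= q (vadd v (vscale t d)) - t * q d) /\
  (forall v M, (forall t, M <= q (vadd v (vscale t d)) - t * q d) -> M <= r v).
Proof.
move=> Hq.
pose S v x := exists t, x = - (q (vadd v (vscale t d)) - t * q d).
have Hlub v : {x | is_lub (S v) x}.
  apply: completeness; last by exists (- (q (vadd v (vscale 0 d)) - 0 * q d)), 0.
  exists (q (vscale (-1) v)) => _ [t ->].
  have := sublinear_scale_ge d t Hq; have [Hadd _] := Hq.
  have := Hadd (vadd v (vscale t d)) (vscale (-1) v).
  have -> : vadd (vadd v (vscale t d)) (vscale (-1) v) = vscale t d by vext.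
  by lra.
exists (fun v => - proj1_sig (Hlub v)); split.
  move=> v t; case: (Hlub v) => x [Hub _] /=.
  by have := Hub _ (ex_intro _ t erefl); lra.
move=> v M HM; case: (Hlub v) => x [_ Hleast] /=.
suff : x <= - M by lra.
by apply: Hleast => _ [t ->]; have := HM t; lra.
Qed.

Lemma sublinear_linearize q d : sublinear q -> exists r,
  [/\ sublinear r, forall v, r v <= q v, lin_along r d (q d) &
      forall d0 c0, lin_along q d0 c0 -> lin_along r d0 c0].
Proof.
move=> Hq; have [r [Hle Hgr]] := linearize_exists d Hq; exists r; split.
- exact: linearize_sublinear Hle Hgr.
- exact: linearize_le Hle.
- exact: linearize_lin_along Hle Hgr.
- exact: linearize_lin_along_other Hle Hgr.
Qed.

Lemma sublinear_linearize_seq p y (s : seq 'I_e) : sublinear p -> exists q,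
  [/\ sublinear q, forall v, q v <= p v, lin_along q y (p y) &
      forall i, i \in s -> exists c, lin_along q (basis i) c].
Proof.
move=> Hp; elim: s => [|i s [q [Hq Hqp Hqy Hqs]]].
  by have [q [Hq Hqp Hqy _]] := sublinear_linearize y Hp; exists q.
have [r [Hr Hrq Hri Hrl]] := sublinear_linearize (basis i) Hq.
exists r; split => //.
- by move=> v; have := Hrq v; have := Hqp v; lra.
- exact: Hrl.
move=> j; rewrite in_cons => /orP [/eqP -> | /Hqs [c Hc]]; first by exists (q (basis i)).
by exists c; apply: Hrl.
Qed.

Theorem sublinear_supporting_functional p y : sublinear p ->
  exists f, (forall v, dot f v <= p v) /\ dot f y = p y.
Proof.
move=> Hp; have [q [Hq Hqp Hqy Hqb]] := sublinear_linearize_seq y (enum 'I_e) Hp.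
have Hlin := sublinear_lin_along_basis Hq (fun i => Hqb i (mem_enum _ i)).
exists (fun i => q (basis i)); split=> [v|]; rewrite -Hlin //.
by rewrite (lin_along_slope Hq Hqy).
Qed.

End Sublinear.

Section Norms.
Variables (e : nat) (N D : vec e -> R).
Hypothesis N_norm : is_norm N.
Hypothesis D_dual : is_dual_norm N D.

Lemma norm_scale c v : N (vscale c v) = Rabs c * N v.
Proof. by case: N_norm => _ []. Qed.

Lemma norm_triangle u v : N (vadd u v) <= N u + N v.
Proof. by case: N_norm => _ []. Qed.

Lemma norm_vzero : N vzero = 0.
Proof.
have -> : (vzero : vec e) = vscale 0 vzero by vext.
by rewrite norm_scale Rabs_R0; ring.
Qed.

Lemma norm_eq0 v : N v = 0 -> v = vzero.
Proof. by case: N_norm => Hdef _; apply: Hdef. Qed.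

Lemma norm_le_add_norm u v : N u <= N (vadd u v) + N v.
Proof.
have := norm_triangle (vadd u v) (vscale (-1) v).
have -> : vadd (vadd u v) (vscale (-1) v) = u by vext.
by rewrite norm_scale Rabs_Ropp Rabs_R1; lra.
Qed.

Lemma norm_ge0 v : 0 <= N v.
Proof.
have := norm_le_add_norm vzero v; rewrite norm_vzero.
have -> : vadd vzero v = v by vext.
by lra.
Qed.

Lemma norm_sublinear : sublinear N.
Proof.
by split=> [|c v Hc]; [exact: norm_triangle | rewrite norm_scale Rabs_pos_eq].
Qed.

Lemma dot_le_dual_norm f v : dot f v <= D f * N v.
Proof.
case: (Req_dec (N v) 0) => [/norm_eq0 ->|Hv].
  by rewrite dot_vzeror norm_vzero; lra.
have Hpos : 0 < N v by have := norm_ge0 v; lra.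
have Hunit : N (vscale (/ N v) v) <= 1.
  by rewrite norm_scale Rabs_pos_eq ?Rinv_l; [lra | lra | apply/Rlt_le/Rinv_0_lt_compat].
have := proj1 (D_dual f) _ (ex_intro _ _ (conj Hunit erefl)).
rewrite dot_scaler => /(Rmult_le_compat_l (N v) _ _ (Rlt_le _ _ Hpos)).
by rewrite -Rmult_assoc Rinv_r ?Rmult_1_l; lra.
Qed.

Lemma dual_norm_norming v : exists f, D f <= 1 /\ dot f v = N v.
Proof.
have [f [Hf Hv]] := sublinear_supporting_functional v norm_sublinear.
exists f; split=> //; apply: (proj2 (D_dual f)) => _ [u [Hu ->]].
by have := Hf u; lra.
Qed.

End Norms.

Lemma sparsity_norm_split e (N D : vec e -> R) Pfam nu Pbar P v :
  sparsity_structure N D Pfam nu Pbar -> Pfam P ->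
  N (mv P v) + N (mv (Pbar P) v) <= N v.
Proof.
move=> [HN [HD HS]] HP; have [_ [_ [_ Hdual]]] := HS P HP.
have [f [Hf <-]] := dual_norm_norming HN HD (mv P v).
have [g [Hg <-]] := dual_norm_norming HN HD (mv (Pbar P) v).
have := Hdual f g; have := Rmax_lub _ _ _ Hf Hg.
set h := vadd (mv (tr P) f) (mv (tr (Pbar P)) g) => Hmax Hh.
rewrite -!dot_tr -dot_addl -/h.
have := dot_le_dual_norm HN HD h v.
by have := Rmult_le_compat_r (N v) (D h) 1 (norm_ge0 HN v) ltac:(lra); lra.
Qed.

Lemma C_set_sub_D_set m e (N D : vec e -> R) Pfam nu Pbar (B : mat e m) P z :
  sparsity_structure N D Pfam nu Pbar -> Pfam P ->
  C_set N B P z -> D_set N B (Pbar P) P z.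
Proof.
move=> HS HP [x [Hx [lam [w [Hlam [Hcone ->]]]]]].
have HN : is_norm N by case: HS.
rewrite /D_set !mv_scale !(norm_scale HN); apply: Rmult_le_compat_l; first exact: Rabs_pos.
have Hsplit v := @sparsity_norm_split _ _ _ _ _ _ P v HS HP.
have HPbar : mv (Pbar P) (mv B x) = vzero.
  apply: (norm_eq0 HN); have := Hsplit (mv B x); rewrite Hx.
  by have := norm_ge0 HN (mv (Pbar P) (mv B x)); lra.
have := Hsplit (vadd (mv B x) (mv B w)).
rewrite !mv_add Hx HPbar -mv_add.
have -> : vadd vzero (mv (Pbar P) (mv B w)) = mv (Pbar P) (mv B w) by vext.
by have := norm_le_add_norm HN (mv B x) (mv P (mv B w)); lra.
Qed.

Theorem lemma6 (n m e : nat) (N D : vec e -> R) (Pfam : mat e e -> Prop)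
  (nu : mat e e -> R) (Pbar : mat e e -> mat e e) (B : mat e m) (A : mat n m) :
  sparsity_structure N D Pfam nu Pbar ->
  (forall P, Pfam P -> forall z, C_set N B P z -> D_set N B (Pbar P) P z) /\
  (forall k : R, 0 <= k ->
     inf_ge (mu_set N Pfam nu B A k) (sigma_set N Pfam nu Pbar B A k)).
Proof.
move=> HS; have HCD P HP z := @C_set_sub_D_set _ _ _ _ _ _ _ B P z HS HP.
split=> // k _ c Hlb _ [P [x [z [HP [Hnu [Hx [Hcone [Hz ->]]]]]]]].
by apply: Hlb; exists P, z; do !split=> //; apply: HCD => //; exists x.
Qed.
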